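(* Let $R$ be a (not necessarily unital) ring, or a (not necessarily unital) $K$-algebra. Then $R$ is locally unit-regular as a ring (respectively, as an algebra) if and only if $R$ is von Neumann regular and $eRe$ is unit-regular for every idempotent $e \in R$.
   Context: A ring $R$ is (von Neumann) regular if for each $x\in R$ there is $y\in R$ with $xyx=x$. A unital ring $S$ is unit-regular if for each $x\in S$ there is a unit $u$ of $S$ with $xux = x$. A ring (resp. $K$-algebra) $R$ is locally unit-regular if every finite subset of $R$ is contained in a subring (resp. $K$-subalgebra) of $R$ that has its own identity element (not necessarily equal to any identity of $R$) and is unit-regular. *)

(* Non-unital rings are not in MathComp, so a (possibly
   non-unital) ring is an additive group V (zmodType) with a multiplication
   satisfying associativity and distributivity; a (possibly non-unital)
   K-algebra is additionally a K-module (lmodType K) whose multiplication is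
   K-bilinear. *)
From HB Require Import structures.
From mathcomp Require Import all_boot all_order all_algebra.
Set Implicit Arguments. Unset Strict Implicit. Unset Printing Implicit Defensive.
Import GRing.Theory.
Local Open Scope ring_scope.

Definition nu_ring_axioms (V : zmodType) (mul : V -> V -> V) : Prop :=
  [/\ forall x y z, mul x (mul y z) = mul (mul x y) z,
      forall x y z, mul (x + y) z = mul x z + mul y z &
      forall x y z, mul x (y + z) = mul x y + mul x z].

Definition nu_alg_axioms (K : comPzRingType) (V : lmodType K)
    (mul : V -> V -> V) : Prop :=
  nu_ring_axioms mul /\
  (forall (k : K) x y, mul (k *: x) y = k *: mul x y /\ mul x (k *: y) = k *: mul x y).

Definition vn_regular (V : zmodType) (mul : V -> V -> V) : Prop :=
  forall x, exists y, mul (mul x y) x = x.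

Definition is_idempotent (V : zmodType) (mul : V -> V -> V) (e : V) : Prop :=
  mul e e = e.

Definition subring_pred (V : zmodType) (mul : V -> V -> V) (S : V -> Prop) : Prop :=
  [/\ S 0, forall x y, S x -> S y -> S (x - y) &
      forall x y, S x -> S y -> S (mul x y)].

Definition subalg_pred (K : comPzRingType) (V : lmodType K)
    (mul : V -> V -> V) (S : V -> Prop) : Prop :=
  subring_pred mul S /\ forall (k : K) x, S x -> S (k *: x).

Definition is_identity_of (V : zmodType) (mul : V -> V -> V) (S : V -> Prop)
    (one : V) : Prop :=
  S one /\ forall x, S x -> mul one x = x /\ mul x one = x.

Definition is_unit_in (V : zmodType) (mul : V -> V -> V) (S : V -> Prop)
    (one u : V) : Prop :=
  S u /\ exists v, [/\ S v, mul u v = one & mul v u = one].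

Definition unit_regular_on (V : zmodType) (mul : V -> V -> V)
    (S : V -> Prop) : Prop :=
  exists one, is_identity_of mul S one /\
    forall x, S x -> exists u, is_unit_in mul S one u /\ mul (mul x u) x = x.

Definition corner (V : zmodType) (mul : V -> V -> V) (e : V) : V -> Prop :=
  fun y => exists x, y = mul (mul e x) e.

Definition locally_unit_regular (V : zmodType) (mul : V -> V -> V) : Prop :=
  forall F : seq V, exists S : V -> Prop,
    [/\ subring_pred mul S, forall x, x \in F -> S x & unit_regular_on mul S].

Definition locally_unit_regular_alg (K : comPzRingType) (V : lmodType K)
    (mul : V -> V -> V) : Prop :=
  forall F : seq V, exists S : V -> Prop,
    [/\ subalg_pred mul S, forall x, x \in F -> S x & unit_regular_on mul S].

From mathcomp Require Import all_boot all_order all_algebra.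
Set Implicit Arguments. Unset Strict Implicit. Unset Printing Implicit Defensive.
Import GRing.Theory.
Local Open Scope ring_scope.

(* A regular ring has local units: given an idempotent e and an element x,
   regularity of x - e x yields an idempotent f orthogonal to e on the left,
   and e + f - f e is an idempotent above e acting as a left unit on x; with
   the opposite ring this gives an idempotent g with g z = z = z g for every z
   in a finite set F, so F lies in the corner gRg, which is unit-regular by
   hypothesis.  Conversely, a corner eRe is unital with identity e, and for c
   in eRe lying in a unit-regular subring S with identity 1, the element
   a = c + (1 - e) of S has a unit-inverse u in S; then e (u - u f u) e, with
   f = 1 - e, is a unit-inverse of c inside eRe. *)

Section NonUnitalRing.
Variables (V : zmodType) (mul : V -> V -> V).
Hypothesis ring_mul : nu_ring_axioms mul.
Local Notation "a ** b" := (mul a b) (at level 40, left associativity).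

Lemma nu_mulA x y z : x ** (y ** z) = x ** y ** z.
Proof. by case: ring_mul. Qed.
Lemma nu_mulDl x y z : (x + y) ** z = x ** z + y ** z.
Proof. by case: ring_mul. Qed.
Lemma nu_mulDr x y z : x ** (y + z) = x ** y + x ** z.
Proof. by case: ring_mul. Qed.
Lemma nu_mul0l x : 0 ** x = 0.
Proof. by apply: (addrI (0 ** x)); rewrite addr0 -nu_mulDl addr0. Qed.
Lemma nu_mul0r x : x ** 0 = 0.
Proof. by apply: (addrI (x ** 0)); rewrite addr0 -nu_mulDr addr0. Qed.
Lemma nu_mulNl x y : (- x) ** y = - (x ** y).
Proof. by apply: (addrI (x ** y)); rewrite -nu_mulDl !subrr nu_mul0l. Qed.
Lemma nu_mulNr x y : x ** (- y) = - (x ** y).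
Proof. by apply: (addrI (x ** y)); rewrite -nu_mulDr !subrr nu_mul0r. Qed.
Lemma nu_mulBl x y z : (x - y) ** z = x ** z - y ** z.
Proof. by rewrite nu_mulDl nu_mulNl. Qed.
Lemma nu_mulBr x y z : x ** (y - z) = x ** y - x ** z.
Proof. by rewrite nu_mulDr nu_mulNr. Qed.

Lemma nu_mulA_eq x y r : x ** y = r -> forall t, t ** x ** y = t ** r.
Proof. by move=> <- t; rewrite nu_mulA. Qed.

Lemma nu_mulA_eq3 x y z r : x ** y ** z = r -> forall t, t ** x ** y ** z = t ** r.
Proof. by move=> <- t; rewrite !nu_mulA. Qed.

Lemma nu_mul_sandwich x a u y p q : x ** a = p -> a ** y = q ->
  x ** (a ** u ** a) ** y = p ** u ** q.
Proof. by move=> <- <-; rewrite !nu_mulA. Qed.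

Lemma regular_idempotent_extend e x : vn_regular mul -> e ** e = e ->
  exists h, [/\ h ** h = h, e ** h = e, h ** e = e & h ** x = x].
Proof.
move=> reg ee; set x' := x - e ** x; have [y x'yx'] := reg x'.
set f := x' ** y.
have ff : f ** f = f by rewrite /f nu_mulA x'yx'.
have fx' : f ** x' = x' by rewrite /f x'yx'.
have ef : e ** f = 0 by rewrite /f nu_mulA nu_mulBr nu_mulA ee subrr nu_mul0l.
clearbody f.
have ee' := nu_mulA_eq ee; have ff' := nu_mulA_eq ff; have ef' := nu_mulA_eq ef.
exists (e + f - f ** e); split; last first.
  by rewrite nu_mulBl nu_mulDl -nu_mulA -addrA -nu_mulBr fx' addrC subrK.
all: rewrite !(nu_mulDl, nu_mulBl, nu_mulDr, nu_mulBr, nu_mulNl, nu_mulNr) ?nu_mulA.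
all: rewrite !(ee', ff', ef', ee, ff, ef, nu_mul0l, nu_mul0r) ?(subr0, addr0, oppr0).
- by rewrite addrK.
- by [].
- by rewrite (addrC (f ** e) f) addrK.
Qed.

End NonUnitalRing.

Lemma nu_ring_axioms_rev (V : zmodType) (mul : V -> V -> V) :
  nu_ring_axioms mul -> nu_ring_axioms (fun a b => mul b a).
Proof. by case=> A Dl Dr; split=> *; rewrite ?A ?Dl ?Dr. Qed.

Lemma vn_regular_rev (V : zmodType) (mul : V -> V -> V) :
  nu_ring_axioms mul -> vn_regular mul -> vn_regular (fun a b => mul b a).
Proof. by move=> ring_mul reg x; have [y xyx] := reg x; exists y; rewrite nu_mulA. Qed.

Section RegularCorners.
Variables (V : zmodType) (mul : V -> V -> V).
Hypothesis ring_mul : nu_ring_axioms mul.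
Local Notation "a ** b" := (mul a b) (at level 40, left associativity).
Local Notation mulA := (nu_mulA ring_mul).
Local Notation mulDl := (nu_mulDl ring_mul).
Local Notation mulDr := (nu_mulDr ring_mul).
Local Notation mulBl := (nu_mulBl ring_mul).
Local Notation mulBr := (nu_mulBr ring_mul).
Local Notation mul0l := (nu_mul0l ring_mul).
Local Notation mul0r := (nu_mul0r ring_mul).
Local Notation mulA_eq := (nu_mulA_eq ring_mul).
Local Notation mulA_eq3 := (nu_mulA_eq3 ring_mul).
Local Notation mul_sandwich := (nu_mul_sandwich ring_mul).

Lemma regular_local_units (F : seq V) : vn_regular mul ->
  exists g, g ** g = g /\ forall z, z \in F -> g ** z = z /\ z ** g = z.
Proof.
move=> reg; elim: F => [|x F [e [ee eF]]].
  by exists 0; rewrite mul0l.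
have [h [hh eh he hx]] := regular_idempotent_extend ring_mul x reg ee.
have [g [/= gg gh hg xg]] := regular_idempotent_extend
  (nu_ring_axioms_rev ring_mul) x (vn_regular_rev ring_mul reg) hh.
exists g; split=> // z; rewrite inE => /orP [/eqP -> | zF].
  by split=> //; rewrite -hx mulA gh.
have [ez ze] := eF z zF.
have hz : h ** z = z by rewrite -ez mulA he.
have zh : z ** h = z by rewrite -ze -mulA eh.
by split; [rewrite -hz mulA gh | rewrite -zh -mulA hg].
Qed.

Lemma corner_subring e : e ** e = e -> subring_pred mul (corner mul e).
Proof.
move=> ee; split.
- by exists 0; rewrite mul0r mul0l.
- by move=> _ _ [a ->] [b ->]; exists (a - b); rewrite !mulBr !mulBl.
- move=> _ _ [a ->] [b ->]; exists (a ** e ** e ** b).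
  by rewrite !mulA -(mulA (e ** a) e e) ee.
Qed.

Lemma corner_identity e : e ** e = e -> is_identity_of mul (corner mul e) e.
Proof.
move=> ee; split; first by exists e; rewrite !ee.
by move=> _ [t ->]; rewrite -!mulA ee !mulA ee.
Qed.

Lemma corner_fixed e x : e ** x = x -> x ** e = x -> corner mul e x.
Proof. by move=> ex xe; exists x; rewrite ex xe. Qed.

Lemma corner_unit_inverse S o e u v : is_identity_of mul S o ->
  S e -> S u -> S v -> e ** e = e -> u ** v = o -> v ** u = o ->
  (o - e) ** u ** (o - e) = o - e ->
  is_unit_in mul (corner mul e) e (e ** (u - u ** (o - e) ** u) ** e).
Proof.
move=> [So io] Se Su Sv ee uv vu; set f := o - e => fuf.
have [oe eo] := io e Se; have [oo _] := io o So.
have [_ uo] := io u Su; have [_ vo] := io v Sv.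
have eof : e = o - f by rewrite /f opprB addrC subrK.
have ef : e ** f = 0 by rewrite mulBr eo ee subrr.
have fe : f ** e = 0 by rewrite mulBl oe ee subrr.
have fo : f ** o = f by rewrite mulBl oo eo.
clearbody f.
have uev : u ** e ** v = o - u ** f ** v by rewrite {1}eof mulBr mulBl uo uv.
have veu : v ** e ** u = o - v ** f ** u by rewrite {1}eof mulBr mulBl vo vu.
split; first by exists (u - u ** f ** u).
exists (e ** v ** e); split; first by exists v.
- rewrite !(mulBl, mulBr) ?mulA.
  rewrite !(mulA_eq ee, mulA_eq3 uev, mulBl, mulBr, mulA_eq fo, eo,
    mulA_eq3 fuf, mulA_eq fe, mul0l, mul0r, mulA).
  by rewrite ee sub0r opprK subrK.
- rewrite !(mulBl, mulBr) ?mulA.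
  rewrite !(mulA_eq ee, mulA_eq3 veu, mulBl, mulBr, mulA_eq fo, eo,
    mulA_eq3 fuf, ef, mul0l, mul0r, mulA).
  by rewrite ee sub0r opprK subrK.
Qed.

Lemma unit_regular_corner_elem S e c : subring_pred mul S -> unit_regular_on mul S ->
  S e -> e ** e = e -> S c -> e ** c = c -> c ** e = c ->
  exists w, is_unit_in mul (corner mul e) e w /\ c ** w ** c = c.
Proof.
move=> [_ SB _] [o [io ur]] Se ee Sc ec ce.
have [So idS] := io; have [oe eo] := idS e Se; have [oc co] := idS c Sc.
have [oo _] := idS o So.
set f := o - e.
have ef : e ** f = 0 by rewrite mulBr eo ee subrr.
have fe : f ** e = 0 by rewrite mulBl oe ee subrr.
have ff : f ** f = f by rewrite {1}/f mulBr mulBl oo eo fe subr0.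
have cf : c ** f = 0 by rewrite mulBr co ce subrr.
have fc : f ** c = 0 by rewrite mulBl oc ec subrr.
have Sa : S (c + f) by rewrite /f -opprB; apply: (SB) => //; apply: (SB).
have [u [[Su [v [Sv uv vu]]] aua]] := ur _ Sa.
have ea : e ** (c + f) = c by rewrite mulDr ec ef addr0.
have ae : (c + f) ** e = c by rewrite mulDl ce fe addr0.
have fa : f ** (c + f) = f by rewrite mulDr fc ff add0r.
have af : (c + f) ** f = f by rewrite mulDl cf ff add0r.
have cuc : c ** u ** c = c by rewrite -(mul_sandwich u ea ae) aua ea ce.
have cuf : c ** u ** f = 0 by rewrite -(mul_sandwich u ea af) aua ea cf.
have fuf : f ** u ** f = f by rewrite -(mul_sandwich u fa af) aua fa ff.
exists (e ** (u - u ** f ** u) ** e); split.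
  exact: corner_unit_inverse io Se Su Sv ee uv vu fuf.
clearbody f; rewrite !(mulBl, mulBr) ?mulA.
by rewrite !(ce, mulA_eq ce, mulA_eq ec, cuf, mul0l, cuc) subr0.
Qed.

Lemma locally_unit_regular_vn_regular : locally_unit_regular mul -> vn_regular mul.
Proof.
move=> L x; have [S [_ FS [o [_ ur]]]] := L [:: x].
by have [u [_ xux]] := ur x (FS x (mem_head _ _)); exists u.
Qed.

Lemma locally_unit_regular_corner e : locally_unit_regular mul ->
  e ** e = e -> unit_regular_on mul (corner mul e).
Proof.
move=> L ee; exists e; split; first exact: corner_identity.
move=> _ [t ->]; set c := e ** t ** e.
have ec : e ** c = c by rewrite /c !mulA ee.
have ce : c ** e = c by rewrite /c -mulA ee.
have [S [subS FS urS]] := L [:: e; c].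
have Se : S e by apply: FS; rewrite mem_head.
have Sc : S c by apply: FS; rewrite !inE eqxx orbT.
exact: unit_regular_corner_elem subS urS Se ee Sc ec ce.
Qed.

Lemma vn_regular_local_corner : vn_regular mul -> forall F : seq V,
  exists g, g ** g = g /\ forall x, x \in F -> corner mul g x.
Proof.
move=> reg F; have [g [gg gF]] := regular_local_units F reg.
by exists g; split=> // x /gF [gx xg]; apply: corner_fixed.
Qed.

Lemma locally_unit_regularP : locally_unit_regular mul <->
  vn_regular mul /\ forall e, is_idempotent mul e -> unit_regular_on mul (corner mul e).
Proof.
split=> [L | [reg ur] F].
  split=> [|e]; first exact: locally_unit_regular_vn_regular.
  exact: locally_unit_regular_corner.
have [g [gg Fg]] := vn_regular_local_corner reg F.
by exists (corner mul g); split=> //; [apply: corner_subring | apply: ur].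
Qed.

End RegularCorners.

Lemma corner_subalg (K : comPzRingType) (V : lmodType K) (mul : V -> V -> V) e :
  nu_alg_axioms mul -> mul e e = e -> subalg_pred mul (corner mul e).
Proof.
move=> [ring_mul bil] ee; split; first exact: corner_subring.
move=> k _ [a ->]; exists (k *: a).
by have [_ ->] := bil k e a; have [-> _] := bil k (mul e a) e.
Qed.

Lemma locally_unit_regular_algP (K : comPzRingType) (V : lmodType K)
    (mul : V -> V -> V) : nu_alg_axioms mul ->
  locally_unit_regular_alg mul <->
  vn_regular mul /\ forall e, is_idempotent mul e -> unit_regular_on mul (corner mul e).
Proof.
move=> alg_mul; have [ring_mul _] := alg_mul.
split=> [L | [reg ur] F].
  apply/(locally_unit_regularP ring_mul) => F.
  by have [S [[subS _] FS urS]] := L F; exists S.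
have [g [gg Fg]] := vn_regular_local_corner ring_mul reg F.
by exists (corner mul g); split=> //; [apply: corner_subalg | apply: ur].
Qed.

Theorem lemma5p1 :
  (forall (V : zmodType) (mul : V -> V -> V), nu_ring_axioms mul ->
     (locally_unit_regular mul <->
      (vn_regular mul /\
       forall e : V, is_idempotent mul e -> unit_regular_on mul (corner mul e))))
  /\
  (forall (K : comPzRingType) (V : lmodType K) (mul : V -> V -> V),
     nu_alg_axioms mul ->
     (locally_unit_regular_alg mul <->
      (vn_regular mul /\
       forall e : V, is_idempotent mul e -> unit_regular_on mul (corner mul e)))).
Proof.
split; [exact: locally_unit_regularP | exact: locally_unit_regular_algP].
Qed.
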